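(* Consider the network setting of the context for every depth $L$, and assume: (i) for each $L$, the quantities $q_\ell,\alpha_\ell,\gamma_\ell,\sigma_{\ell+1}$ ($\ell=0,\dots,L-1$) do not depend on $\ell$ (write them $q^{(L)},\alpha^{(L)},\gamma^{(L)},\sigma^{(L)}$), and each converges to a finite limit as $L\to\infty$, with $q=\lim_{L\to\infty}q^{(L)}$; (ii) the limits $\varepsilon_1=\lim_{L\to\infty}L(1-\alpha^{(L)})$ and $\varepsilon_2=-\lim_{L\to\infty}L\log((\sigma^{(L)})^2\gamma^{(L)})$ exist and $|\varepsilon_1|,|\varepsilon_2|<1$. Let $m_1(\mu)=\int x\,\mu(dx)$. Then $$\lim_{L\to\infty}L^{-1}m_1(\mu_L)=q\,\frac{1-\exp(-\varepsilon_1-\varepsilon_2)}{\varepsilon_1+\varepsilon_2},$$ where $(1-e^{-x})/x$ is interpreted as $1$ at $x=0$. In particular the limit equals $q(1-(\varepsilon_1+\varepsilon_2)/2)+O((\varepsilon_1+\varepsilon_2)^2)$ as $\varepsilon_1,\varepsilon_2\to0$.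
   Context: Network setting (depth $L$, width $M$): weights $W_\ell\in\mathbb R^{M\times M}$ with $W_\ell/\sigma_\ell$ ($\sigma_\ell>0$) independent Haar orthogonal; pointwise activations $\varphi^\ell$ continuous and differentiable except at finitely many points; $x^0=x\in\mathbb R^M$, $h^\ell=W_\ell x^{\ell-1}$, $x^\ell=\varphi^\ell(h^\ell)$, $f_\theta(x)=h^L$, $\theta=(W_1,\dots,W_L)$; $D_\ell=\partial x^\ell/\partial h^\ell$; $\hat q_\ell=\|x^\ell\|^2/M$ with $\hat q_0\to q_0>0$ and $q_\ell=\lim_{M\to\infty}\hat q_\ell$. $H_\ell=\frac1M\frac{\partial h^\ell}{\partial(W_1,\dots,W_\ell)}\frac{\partial h^\ell}{\partial(W_1,\dots,W_\ell)}^\top$ (dual conditional Fisher information matrix). Assume $(D_\ell)_{\ell=1}^{L-1}$ is asymptotically free from $(W_\ell,W_\ell^\top)_{\ell=1}^L$ as $M\to\infty$ almost surely and the limit spectral distribution of $D_\ell^2$ is $\nu_\ell=(1-\alpha_\ell)\delta_0+\alpha_\ell\delta_{\gamma_\ell}$, $0<\alpha_\ell<1$, $\gamma_\ell>0$. $\mu_\ell$ is the limit spectral distribution of $H_\ell$ as $M\to\infty$; under these assumptions $\mu_1=\delta_{q_0}$ and $\mu_{\ell+1}=(q_\ell+\sigma_{\ell+1}^2\,\cdot\,)_*(\nu_\ell\boxtimes\mu_\ell)$, with $\boxtimes$ free multiplicative convolution and $(b+a\,\cdot\,)_*$ the pushforward under $t\mapsto b+at$. *)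

From HB Require Import structures.
From mathcomp Require Import all_boot all_order all_algebra.
From mathcomp Require Import all_classical all_reals all_analysis.
Set Implicit Arguments. Unset Strict Implicit. Unset Printing Implicit Defensive.
Import Order.TTheory GRing.Theory Num.Theory.
Import numFieldNormedType.Exports.

Local Open Scope ring_scope.

Definition mom (R : realType) (mu : probability R R) (n : nat) : \bar R :=
  (\int[mu]_x (x ^+ n)%:E)%E.

Definition noncrossing (n : nat) (P : {set {set 'I_n}}) : bool :=
  [forall B1 in P, forall B2 in P, (B1 != B2) ==>
     ~~ [exists a : 'I_n, exists b : 'I_n, exists c : 'I_n, exists d : 'I_n,
           [&& (a < b)%N, (b < c)%N, (c < d)%N, a \in B1, c \in B1,
               b \in B2 & d \in B2]]].

Definition NC (n : nat) : {set {set {set 'I_n}}} :=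
  [set P : {set {set 'I_n}} | finset.partition P [set: 'I_n]%SET && noncrossing P].

Definition is_free_cumulants (R : realType) (mu : probability R R) (k : nat -> R) :=
  forall n : nat, (0 < n)%N ->
    mom mu n = (\sum_(P in NC n) \prod_(B in P) k #|B|)%:E.

Definition even_pos (n : nat) : {set 'I_n} := [set i : 'I_n | ~~ odd i].
Definition odd_pos (n : nat) : {set 'I_n} := [set i : 'I_n | odd i].

(* rho = nu boxtimes mu: the moments of rho are those of a*b with a ~ nu, b ~ mu
   free, given by the mixed-cumulant formula over NC(2n) for the word abab...ab
   (a at even positions, b at odd positions), mixed free cumulants vanishing. *)
Definition is_free_mult_conv (R : realType) (nu mu rho : probability R R) :=
  exists kn km : nat -> R,
    is_free_cumulants nu kn /\ is_free_cumulants mu km /\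
    forall n : nat, (0 < n)%N ->
      mom rho n =
      (\sum_(P in NC (2 * n)) \prod_(B in P)
          (if B \subset even_pos (2 * n) then kn #|B|
           else if B \subset odd_pos (2 * n) then km #|B| else 0))%:E.

Definition phi_exp (R : realType) (x : R) : R :=
  if x == 0 then 1 else (1 - expR (- x)) / x.

(* The first moment is multiplicative under free multiplicative convolution:
   in NC(1) and NC(2) only the partitions {{1}} and {{1},{2}} contribute, the
   one-block partition of NC(2) being mixed.  With m1(nu) = alpha gamma and the
   affine pushforward sending m to q + sigma^2 m, this gives
   m1(mu_L) = q (1 + c + ... + c^(L-1)) with c = sigma^2 alpha gamma.
   Writing c = exp(-t/L) with t = -L ln c, the average of the geometric sum is
   phi(t) / phi(t/L) for phi(x) = (1 - e^-x)/x, which is continuous with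
   phi(0) = 1; and t -> eps1 + eps2 because L (1 - alpha) and -L ln alpha have
   the same limit.  The expansion is the Taylor bound
   |phi(x) - (1 - x/2)| <= 2 x^2 for |x| <= 1/2. *)

From HB Require Import structures.
From mathcomp Require Import all_boot all_order all_algebra.
From mathcomp Require Import all_classical all_reals all_analysis.
From mathcomp Require Import ring lra zify.
From mathcomp Require Import measurable_realfun.
Import Order.TTheory GRing.Theory Num.Theory.
Import numFieldNormedType.Exports.
Local Open Scope ring_scope.

Lemma noncrossing_lt4 (n : nat) (P : {set {set 'I_n}}) : (n < 4)%N -> noncrossing P.
Proof.
move=> n_lt4; apply/forall_inP => B1 _; apply/forall_inP => B2 _; apply/implyP => _.
apply/negP => /existsP[a /existsP[b /existsP[c /existsP[d /and3P[ab bc /andP[cd _]]]]]].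
by have := ltn_ord d; lia.
Qed.

Lemma NC1E : NC 1 = [set [set [set: 'I_1]]].
Proof.
have setI1 (B : {set 'I_1}) : B != finset.set0 -> B = [set: 'I_1].
  by case/finset.set0Pn => i; rewrite (ord1 i) => i_in; apply/setP => j; rewrite (ord1 j) inE.
apply/setP => P; rewrite !inE noncrossing_lt4 // andbT; apply/idP/eqP => [|->].
  move=> /and3P[/eqP coverP _ P0]; apply/setP => B; rewrite inE.
  have blockT C : C \in P -> C = [set: 'I_1].
    by move=> CP; apply: setI1; apply: contraNneq P0 => <-.
  apply/idP/eqP => [/blockT //|->].
  have : ord0 \in finset.cover P by rewrite coverP inE.
  by case/bigcupP => C /[dup] /blockT ->.
rewrite /finset.partition finset.cover1 eqxx finset.trivIset1 inE eq_sym.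
by apply/negP => /eqP/setP/(_ ord0); rewrite !inE.
Qed.

Lemma big_NC1 (R : pzSemiRingType) (k : nat -> R) :
  \sum_(P in NC 1) \prod_(B in P) k #|B| = k 1%N.
Proof. by rewrite NC1E big_set1 big_set1 cardsT card_ord. Qed.

Lemma ord2_cases (i : 'I_2) : i = ord0 \/ i = ord_max.
Proof. by case: i => [[|[|//]]] ?; [left|right]; apply/val_inj. Qed.

Lemma subset_ord2_cases (B : {set 'I_2}) :
  [\/ B = finset.set0, B = [set ord0], B = [set ord_max] | B = [set: 'I_2]].
Proof.
have eq_set (C : {set 'I_2}) : (forall i, (i \in B) = (i \in C)) -> B = C.
  by move=> BC; apply/setP.
case B0 : (ord0 \in B); case B1 : (ord_max \in B); [apply: Or44 | apply: Or42
  | apply: Or43 | apply: Or41]; apply: eq_set => i;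
  by case: (ord2_cases i) => ->; rewrite !inE ?B0 ?B1.
Qed.

Definition singletons2 : {set {set 'I_2}} := [set [set ord0]; [set ord_max]].

Lemma singletons2_NC : singletons2 \in NC 2.
Proof.
rewrite inE noncrossing_lt4 // andbT; apply/and3P; split.
- apply/eqP/setP => i; rewrite inE; apply/bigcupP.
  by case: (ord2_cases i) => ->; [exists [set ord0] | exists [set ord_max]];
    rewrite !inE ?eqxx ?orbT.
- apply/finset.trivIsetP => A B; rewrite !inE => /orP[] /eqP -> /orP[] /eqP ->;
    rewrite ?eqxx // => _; by rewrite disjoints1 inE.
- by rewrite !inE; apply/negP => /orP[] /eqP /setP; [move/(_ ord0) | move/(_ ord_max)];
    rewrite !inE.
Qed.

Lemma NC2_setT (P : {set {set 'I_2}}) :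
  P \in NC 2 -> P != singletons2 -> [set: 'I_2] \in P.
Proof.
rewrite inE => /andP[/and3P[/eqP coverP _ P0] _]; apply: contraNT => PT.
have singleton B : B \in P -> B = [set ord0] \/ B = [set ord_max].
  move=> BP; case: (subset_ord2_cases B) => EB; rewrite EB in BP; try by [left|right].
    by rewrite BP in P0.
  by rewrite BP in PT.
have block_of i : i \in finset.cover P by rewrite coverP inE.
apply/eqP/setP => B; rewrite !inE; apply/idP/idP.
  by case/singleton => ->; rewrite eqxx ?orbT.
by move=> /orP[] /eqP ->; [case/bigcupP: (block_of ord0) | case/bigcupP: (block_of ord_max)];
  move=> C CP; case: (singleton C CP) => EC; rewrite EC ?inE // in CP *.
Qed.

Lemma big_NC2_alternating (R : comPzSemiRingType) (kn km : nat -> R) :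
  \sum_(P in NC 2) \prod_(B in P)
     (if B \subset even_pos 2 then kn #|B|
      else if B \subset odd_pos 2 then km #|B| else 0) = kn 1%N * km 1%N.
Proof.
rewrite (bigD1 singletons2) ?singletons2_NC //= [X in _ + X]big1 ?addr0; last first.
  move=> P /andP[PNC P1]; rewrite (bigD1 [set: 'I_2]) ?NC2_setT //=.
  have /negbTE-> : ~~ ([set: 'I_2] \subset even_pos 2).
    by apply/subsetPn; exists ord_max; rewrite inE.
  have /negbTE-> : ~~ ([set: 'I_2] \subset odd_pos 2).
    by apply/subsetPn; exists ord0; rewrite inE.
  by rewrite mul0r.
rewrite big_setU1 ?big_set1 ?cards1 /=; last first.
  by rewrite inE; apply/negP => /eqP/setP/(_ ord0); rewrite !inE.
by rewrite !finset.sub1set !inE.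
Qed.

Section first_moment.
Local Open Scope classical_set_scope.
Local Open Scope ereal_scope.
Context {R : realType}.
Implicit Types (mu nu rho : probability R R) (a b s m : R).

Lemma mom1E mu : mom mu 1 = \int[mu]_x x%:E.
Proof. by rewrite /mom; under eq_integral do rewrite expr1. Qed.

Lemma mom1_dirac mu a :
  (forall A, measurable A -> mu A = \d_a A) -> mom mu 1 = a%:E.
Proof.
move=> muE; rewrite mom1E (eq_measure_integral \d_a); last by move=> A mA _; exact: muE.
by rewrite integral_dirac // diracE mem_set // mul1e.
Qed.

Section two_point.
Context {nu : probability R R} {a x0 x1 : R}.
Hypotheses (a_ge0 : (0 <= a)%R) (a_le1 : (a <= 1)%R).
Hypothesis nuE : forall A, measurable A ->
  nu A = (1 - a)%:E * \d_x0 A + a%:E * \d_x1 A.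

Lemma ge0_integral_two_point (f : R -> \bar R) :
  measurable_fun setT f -> (forall x, 0 <= f x) ->
  \int[nu]_x f x = (1 - a)%:E * f x0 + a%:E * f x1.
Proof.
move=> mf f_ge0; have a'_ge0 : (0 <= 1 - a)%R by rewrite subr_ge0.
pose m := measure_add (mscale (NngNum a'_ge0) \d_x0) (mscale (NngNum a_ge0) \d_x1).
rewrite (eq_measure_integral m); last first.
  by move=> A mA _; apply: eq_trans (nuE _ mA) _; symmetry; exact: measure_addE.
rewrite ge0_integral_measure_add // !ge0_integral_mscale //= !integral_dirac //.
by rewrite !diracE !mem_set // !mul1e.
Qed.

Lemma mom1_two_point : mom nu 1 = ((1 - a) * x0 + a * x1)%:E.
Proof.
have mid : measurable_fun setT (@EFin R) by exact/measurable_EFinP.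
rewrite mom1E integralE !ge0_integral_two_point //; last 2 first.
- exact: measurable_funeneg.
- exact: measurable_funepos.
rewrite !funeposE !funenegE -!EFinN -!EFin_max -!EFinM -!EFinD; congr EFin.
have maxN (y : R) : (Num.max y 0 - Num.max (- y) 0 = y)%R.
  by rewrite !maxEle; do 2 case: ifPn; lra.
by rewrite -[x0 in RHS]maxN -[x1 in RHS]maxN; ring.
Qed.
End two_point.

Lemma fin_num_integrable d (T : measurableType d) (m : {measure set T -> \bar R})
    (D : set T) (f : T -> \bar R) :
  measurable D -> measurable_fun D f ->
  \int[m]_(x in D) f x \is a fin_num -> m.-integrable D f.
Proof.
move=> mD mf; rewrite integralE fin_numB => /andP[fpos fneg].
apply/integrableP; split => //.
rewrite (_ : (fun x => `|f x|) = f^\+ \+ f^\-); last first.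
  by apply/funext => x; rewrite -/((abse \o f) x) fune_abse.
rewrite ge0_integralD //; last 2 first.
- exact: measurable_funepos.
- exact: measurable_funeneg.
by rewrite ltey_eq fin_numD fpos fneg.
Qed.

Lemma mom1_affine_pushforward {mu rho a s m} :
  (forall A, measurable A -> mu A = rho ((fun t => a + s * t)%R @^-1` A)) ->
  mom rho 1 = m%:E -> mom mu 1 = (a + s * m)%:E.
Proof.
move=> muE rho1.
have maff : measurable_fun setT (fun t : R => a + s * t)%R.
  by apply: measurable_funD => //; exact: measurable_funM.
have mid : measurable_fun setT (@EFin R) by exact/measurable_EFinP.
have int_id : rho.-integrable setT (@EFin R).
  by apply: fin_num_integrable => //; rewrite -mom1E rho1.
have int_cst : rho.-integrable setT (cst a%:E).
  by apply: finite_measure_integrable_cst.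
have int_aff : rho.-integrable setT (fun t => (a + s * t)%:E).
  rewrite (_ : (fun t => _) = (fun t => a%:E + s%:E * t%:E)); last first.
    by apply/funext => t; rewrite EFinD EFinM.
  by apply: integrableD => //; exact: integrableZl.
have := integral_pushforward maff mid (_ : rho.-integrable (_ @^-1` setT) _) measurableT.
rewrite preimage_setT => /(_ int_aff).
rewrite (eq_measure_integral mu); last by move=> A mA _; exact/esym/muE.
rewrite -mom1E => ->.
under eq_integral do rewrite /comp EFinD EFinM.
rewrite integralD //; last exact: integrableZl.
rewrite integralZl // -mom1E rho1 integral_cst //.
by rewrite [X in _ * X](_ : _ = 1) ?mule1 -?EFinM -?EFinD //; exact: probability_setT.
Qed.

Lemma mom1_free_mult_conv {nu mu rho a b} :
  is_free_mult_conv nu mu rho -> mom nu 1 = a%:E -> mom mu 1 = b%:E ->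
  mom rho 1 = (a * b)%:E.
Proof.
move=> [kn [km [knE [kmE rhoE]]]] nu1 mu1.
move: (knE 1%N isT) (kmE 1%N isT); rewrite !big_NC1 nu1 mu1 => -[->] [->].
by rewrite rhoE // big_NC2_alternating.
Qed.

End first_moment.

Section phi_exp.
Local Open Scope classical_set_scope.
Context {R : realType}.
Implicit Types (a x y : R).

Lemma sum_geometric_half_le a m n : 0 <= a <= 1/2 ->
  \sum_(k < n) a ^+ (k + m) <= 2 * a ^+ m - 2 * a ^+ (n + m).
Proof.
move=> /andP[a_ge0 a_le]; elim: n => [|n IHn]; first by rewrite big_ord0 add0n subrr.
rewrite big_ord_recr /=.
have : 2 * a ^+ (n.+1 + m) <= a ^+ (n + m).
  by rewrite addSn exprS mulrA ler_piMl ?exprn_ge0 //; lra.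
lra.
Qed.

Lemma exp_coeff_series_taylor2 y n : `|y| <= 1/2 ->
  `|series (exp_coeff y) (3 + n)%N - (1 + y + y ^+ 2 / 2)| <= 2 * `|y| ^+ 3.
Proof.
move=> y_le; rewrite /series /= big_mkord big_split_ord /=.
have -> : \sum_(i < 3) exp_coeff y (lshift n i) = 1 + y + y ^+ 2 / 2.
  by rewrite !big_ord_recr big_ord0 /= /exp_coeff /= expr0 expr1 !factE /=; lra.
rewrite addrC addrK (le_trans (ler_norm_sum _ _ _)) //.
apply: le_trans (_ : _ <= \sum_(k < n) `|y| ^+ (k + 3)) _; last first.
  have := @sum_geometric_half_le `|y| 3 n; rewrite normr_ge0 y_le => /(_ isT).
  by have := exprn_ge0 (n + 3) (normr_ge0 y); lra.
apply: ler_sum => i _; rewrite /exp_coeff /= normrM normrX addnC.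
rewrite -[leRHS]mulr1 ler_wpM2l ?exprn_ge0 // normrV ?unitfE ?pnatr_eq0 -?lt0n ?fact_gt0 //.
by rewrite ger0_norm // invf_le1 ?ltr0n ?fact_gt0 // ler1n fact_gt0.
Qed.

Lemma expR_taylor2 y : `|y| <= 1/2 ->
  `|expR y - (1 + y + y ^+ 2 / 2)| <= 2 * `|y| ^+ 3.
Proof.
move=> y_le; set p := 1 + y + y ^+ 2 / 2.
have near_p : \forall n \near \oo, `|series (exp_coeff y) n - p| <= 2 * `|y| ^+ 3.
  by exists 3%N => // n /= n_ge3; rewrite -(subnKC n_ge3) exp_coeff_series_taylor2.
have := is_cvg_series_exp_coeff y => cvg_exp.
rewrite ler_norml; apply/andP; split.
- rewrite lerBrDr /expR; apply: limr_ge => //; near=> n.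
  have : `|series (exp_coeff y) n - p| <= 2 * `|y| ^+ 3 by near: n.
  by rewrite ler_norml => /andP[]; lra.
- rewrite lerBlDr /expR; apply: limr_le => //; near=> n.
  have : `|series (exp_coeff y) n - p| <= 2 * `|y| ^+ 3 by near: n.
  by rewrite ler_norml => /andP[]; lra.
Unshelve. all: by end_near.
Qed.

Lemma phi_exp0 : phi_exp (0 : R) = 1.
Proof. by rewrite /phi_exp eqxx. Qed.

Lemma phi_exp_taylor1 x : `|x| <= 1/2 ->
  `|phi_exp x - (1 - x / 2)| <= 2 * x ^+ 2.
Proof.
move=> x_le; rewrite /phi_exp; have [->|x_neq0] := eqVneq x 0.
  by rewrite mul0r subr0 subrr normr0 mulr_ge0 ?sqr_ge0.
have := @expR_taylor2 (- x); rewrite normrN => /(_ x_le) taylor.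
have -> : (1 - expR (- x)) / x - (1 - x / 2) =
    - (expR (- x) - (1 + - x + (- x) ^+ 2 / 2)) / x by field.
rewrite normrM normrN normrV ?unitfE // ler_pdivrMr ?normr_gt0 //.
by rewrite (le_trans taylor) // -real_normK ?num_real // -mulrA -exprSr.
Qed.

Lemma scaled_phi_exp_expansion (k : R) : exists C delta : R, 0 < delta /\
  forall x, `|x| < delta -> `|k * phi_exp x - k * (1 - x / 2)| <= C * x ^+ 2.
Proof.
exists (2 * `|k|), (1/2); split=> [|x /ltW x_le]; first lra.
by rewrite -mulrBr normrM [2 * _]mulrC -mulrA ler_wpM2l // phi_exp_taylor1.
Qed.

Lemma continuous_phi_exp : continuous (@phi_exp R).
Proof.
move=> x0; have [->|x0_neq0] := eqVneq x0 0.
  apply/cvgrPdist_le => e e_gt0; rewrite phi_exp0.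
  have r_gt0 : 0 < Num.min (1/2) (e/4) by rewrite lt_min; apply/andP; split; lra.
  move/cvgrPdist_le : (@cvg_id _ (nbhs (0 : R))) => /(_ _ r_gt0).
  apply: filterS => x; rewrite sub0r normrN le_min => /andP[x_le x_le_e].
  have := phi_exp_taylor1 x x_le; rewrite !ler_norml => /andP[lo hi].
  have : x ^+ 2 <= `|x| / 2.
    rewrite -real_normK ?num_real // expr2.
    by have := ler_wpM2l (normr_ge0 x) x_le; lra.
  by have := ler_norm x; have := ler_norm (- x); rewrite normrN; lra.
have g_cvg : (fun x => (1 - expR (- x)) / x) @ x0 --> phi_exp x0.
  rewrite /phi_exp (negbTE x0_neq0); apply: cvgM; last exact: cvgV.
  apply: cvgB; first exact: cvg_cst.
  by apply: continuous_cvg; [exact: continuous_expR | exact: cvgN].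
apply: cvg_trans g_cvg; apply: near_eq_cvg.
near=> x; rewrite /phi_exp ifF //; apply/negbTE.
by near: x; exact: (cvgr_neq0 x0 cvg_id).
Unshelve. all: by end_near.
Qed.

Lemma avg_geometric_sum (L : nat) (c : R) : (0 < L)%N -> 0 < c ->
  let t := - (L%:R * ln c) in
  (L%:R)^-1 * \sum_(k < L) c ^+ k = phi_exp t / phi_exp (t / L%:R).
Proof.
move=> L_gt0 c_gt0 t; have L_neq0 : (L%:R : R) != 0 by rewrite pnatr_eq0 -lt0n.
have cE : c = expR (- (t / L%:R)) by rewrite /t mulNr opprK mulrC mulKf // lnK.
have [t0|t_neq0] := eqVneq t 0.
  have -> : c = 1 by rewrite cE t0 mul0r oppr0 expR0.
  under eq_bigr do rewrite expr1n.
  by rewrite t0 mul0r phi_exp0 divr1 sumr_const card_ord -[_ *+ L]mulr_natr mul1r mulVf.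
have tL_neq0 : t / L%:R != 0 by rewrite mulf_neq0 // invr_eq0.
have c_neq1 : c != 1.
  by apply: contra t_neq0 => /eqP c1; rewrite /t c1 ln1 mulr0 oppr0.
have cL : expR (- t) = c ^+ L by rewrite cE -expRM_natl mulrN mulrC mulfVK.
rewrite /phi_exp (negbTE t_neq0) (negbTE tL_neq0) cL -cE.
have -> : \sum_(k < L) c ^+ k = (c ^+ L - 1) / (c - 1).
  by rewrite subrX1 mulrC mulKf // subr_eq0.
by field; rewrite L_neq0 t_neq0 !subr_eq0 eq_sym c_neq1.
Qed.
End phi_exp.

Section depth_limits.
Local Open Scope classical_set_scope.
Context {R : realType}.

Lemma cvg_invn : (fun n : nat => (n%:R : R)^-1) @ \oo --> 0.
Proof. by rewrite -cvg_shiftS; exact: cvg_harmonic. Qed.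

Lemma cvg_scaled_ln {a : nat -> R} {e : R} : (forall n, 0 < a n) ->
  (fun n => n%:R * (1 - a n)) @ \oo --> e ->
  (fun n => - (n%:R * ln (a n))) @ \oo --> e.
Proof.
move=> a_gt0 scaled_cvg.
have a_cvg : a @ \oo --> (1 : R).
  have : (fun n => 1 - n%:R * (1 - a n) * (n%:R)^-1) @ \oo --> (1 - e * 0 : R).
    exact: cvgB (cvg_cst _) (cvgM scaled_cvg cvg_invn).
  rewrite mulr0 subr0; apply: cvg_trans; apply: near_eq_cvg.
  near=> n; rewrite mulrC mulKf ?subKr // pnatr_eq0 -lt0n.
  by near: n; exists 1%N.
have up_cvg : (fun n => n%:R * (1 - a n) * (a n)^-1) @ \oo --> e.
  have := cvgM scaled_cvg (cvgV (oner_neq0 R) a_cvg).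
  by rewrite invr1 mulr1; apply.
(* squeeze with 1 - a <= - ln a <= (1 - a) / a *)
apply: (squeeze_cvgr _ scaled_cvg up_cvg); apply: nearW => n.
have n_ge0 : (0 : R) <= n%:R by rewrite ler0n.
have an_gt0 := a_gt0 n.
rewrite -mulrN -mulrA; apply/andP; split; rewrite ler_wpM2l //.
  by have := @le_ln1Dx R (a n - 1); rewrite subrKC; lra.
have ainv_gt0 : 0 < (a n)^-1 by rewrite invr_gt0.
have := @le_ln1Dx R ((a n)^-1 - 1); rewrite subrKC lnV ?posrE //.
by rewrite mulrBl mul1r mulfV ?gt_eqF //; apply; lra.
Unshelve. all: by end_near.
Qed.

Lemma cvg_avg_geometric_sum {c : nat -> R} {e : R} : (forall n, 0 < c n) ->
  (fun n => - (n%:R * ln (c n))) @ \oo --> e ->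
  (fun n => (n%:R)^-1 * \sum_(k < n) c n ^+ k) @ \oo --> phi_exp e.
Proof.
move=> c_gt0; set t := fun n => _ => t_cvg.
have tn_cvg : (fun n => t n / n%:R) @ \oo --> 0.
  by have := cvgM t_cvg cvg_invn; rewrite mulr0; apply.
have : (fun n => phi_exp (t n) / phi_exp (t n / n%:R)) @ \oo --> phi_exp e / 1.
  apply: cvgM; first by apply: continuous_cvg; [exact: continuous_phi_exp | exact: t_cvg].
  apply: cvgV (oner_neq0 R) _; rewrite -[X in _ --> X](@phi_exp0 R).
  by apply: continuous_cvg; [exact: continuous_phi_exp | exact: tn_cvg].
rewrite divr1; apply: cvg_trans; apply: near_eq_cvg; near=> n.
by rewrite avg_geometric_sum //; near: n; exists 1%N.
Unshelve. all: by end_near.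
Qed.
End depth_limits.

Local Open Scope classical_set_scope.
Local Open Scope ring_scope.

Lemma mom1_layers {R : realType} {nu : probability R R} {mu rho : nat -> probability R R}
    {L : nat} {q s m : R} :
  mom nu 1 = m%:E ->
  (forall A, measurable A -> mu 1%N A = \d_q A) ->
  (forall l, (1 <= l)%N -> (l < L)%N -> is_free_mult_conv nu (mu l) (rho l)) ->
  (forall l (A : set R), (1 <= l)%N -> (l < L)%N -> measurable A ->
     mu l.+1 A = rho l ((fun t => q + s * t) @^-1` A)) ->
  forall l, (0 < l <= L)%N -> mom (mu l) 1 = (q * \sum_(k < l) (s * m) ^+ k)%:E.
Proof.
move=> nu1 mu1E convE muE; elim=> [//|[_ _|l IHl /andP[_ lL]]].
  by rewrite big_ord1 expr0 mulr1; exact: mom1_dirac.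
have mu_l := IHl (ltnW lL).
have rho_l := mom1_free_mult_conv (convE l.+1 isT lL) nu1 mu_l.
rewrite (mom1_affine_pushforward (fun A => muE l.+1 A isT lL) rho_l); congr EFin.
rewrite [in RHS]big_ord_recl expr0 /=.
under [in RHS]eq_bigr do rewrite exprS.
by rewrite -mulr_sumr; ring.
Qed.

Theorem proposition4p4 (R : realType)
  (q alpha gamma sigma : nat -> R)
  (nu : nat -> probability R R)
  (mu rho : nat -> nat -> probability R R)
  (qlim eps1 eps2 : R) :
  (* standing assumptions of the setting, for every depth L *)
  (forall L, 0 < q L) ->
  (forall L, 0 < alpha L < 1) ->
  (forall L, 0 < gamma L) ->
  (forall L, 0 < sigma L) ->
  (* nu L = (1 - alpha) delta_0 + alpha delta_gamma *)
  (forall L (A : set R), measurable A ->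
     nu L A = ((1 - alpha L)%R%:E * \d_(0%R : R) A + (alpha L)%:E * \d_(gamma L) A)%E) ->
  (* mu_1 = delta_{q_0} *)
  (forall L (A : set R), (1 <= L)%N -> measurable A -> mu L 1%N A = \d_(q L) A) ->
  (* mu_{l+1} = (q + sigma^2 .)_* (nu boxtimes mu_l), l = 1 .. L-1 *)
  (forall L l, (1 <= l)%N -> (l < L)%N -> is_free_mult_conv (nu L) (mu L l) (rho L l)) ->
  (forall L l (A : set R), (1 <= l)%N -> (l < L)%N -> measurable A ->
     mu L l.+1 A = rho L l ((fun t => q L + sigma L ^+ 2 * t) @^-1` A)) ->
  (* (i) convergence of the parameters *)
  cvg (q @ \oo) -> cvg (alpha @ \oo) -> cvg (gamma @ \oo) -> cvg (sigma @ \oo) ->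
  qlim = lim (q @ \oo) ->
  (* (ii) *)
  (fun L => L%:R * (1 - alpha L)) @ \oo --> eps1 ->
  (fun L => - (L%:R * ln (sigma L ^+ 2 * gamma L))) @ \oo --> eps2 ->
  `|eps1| < 1 -> `|eps2| < 1 ->
  ((fun L => ((L%:R)^-1)%:E * mom (mu L L) 1)%E @ \oo
     --> (qlim * phi_exp (eps1 + eps2))%:E)
  /\
  (exists C delta : R, 0 < delta /\
     forall x : R, `|x| < delta ->
       `|qlim * phi_exp x - qlim * (1 - x / 2)| <= C * x ^+ 2).
Proof.
move=> _ alpha01 gamma_gt0 sigma_gt0 nuE mu1E convE muE q_cvg _ _ _ qlimE
  eps1_cvg eps2_cvg _ _.
split; last exact: scaled_phi_exp_expansion.
pose c L := sigma L ^+ 2 * (alpha L * gamma L).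
have alpha_gt0 L : 0 < alpha L by case/andP: (alpha01 L).
have c_gt0 L : 0 < c L by rewrite !mulr_gt0 ?exprn_gt0.
have nu1 L : mom (nu L) 1 = (alpha L * gamma L)%:E.
  have [a_gt0 a_lt1] := andP (alpha01 L).
  by rewrite (mom1_two_point (ltW a_gt0) (ltW a_lt1) (nuE L)) mulr0 add0r.
have momE L : (0 < L)%N -> mom (mu L L) 1 = (q L * \sum_(k < L) c L ^+ k)%:E.
  move=> L_gt0; apply: (mom1_layers (nu1 L) _ (convE L) (muE L)).
    by move=> A; exact: mu1E.
  by rewrite L_gt0 leqnn.
have t_cvg : (fun L => - (L%:R * ln (c L))) @ \oo --> eps1 + eps2.
  have -> : (fun L => - (L%:R * ln (c L))) = (fun L =>
      - (L%:R * ln (alpha L)) + - (L%:R * ln (sigma L ^+ 2 * gamma L))).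
    apply/funext => L; rewrite /c mulrCA [in LHS]lnM ?posrE ?mulr_gt0 ?exprn_gt0 //.
    by rewrite mulrDr opprD.
  exact: cvgD (cvg_scaled_ln alpha_gt0 eps1_cvg) eps2_cvg.
have q_lim : q @ \oo --> qlim by rewrite qlimE; exact: q_cvg.
have avg_cvg : (fun L => q L * ((L%:R)^-1 * \sum_(k < L) c L ^+ k)) @ \oo
    --> qlim * phi_exp (eps1 + eps2).
  exact: cvgM q_lim (cvg_avg_geometric_sum c_gt0 t_cvg).
apply: cvg_EFin.
  near=> L; have L_gt0 : (0 < L)%N by near: L; exists 1%N.
  by rewrite momE // -EFinM.
apply: cvg_trans avg_cvg; apply: near_eq_cvg; near=> L.
have L_gt0 : (0 < L)%N by near: L; exists 1%N.
by rewrite /= momE // mulrCA.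
Unshelve. all: by end_near.
Qed.
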